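(* Let $Q$ be an absolutely continuous stochastic algorithm with canonical Hamiltonian $H_Q$, let $F:\mathcal{H}\times\mathcal{X}^n\to\mathbb{R}$ be measurable, and define for $h\in\mathcal{H}$ $$\psi_F(h):=\ln \mathbb{E}_{\mathbf{X}\sim\mu^n}\left[\exp\left(F(h,\mathbf{X})+H_Q(h,\mathbf{X})-\mathbb{E}_{\mathbf{X}'\sim\mu^n}[H_Q(h,\mathbf{X}')]\right)\right].$$ Then: (i) $\ln \mathbb{E}_{\mathbf{X}\sim\mu^n}\mathbb{E}_{h\sim Q_{\mathbf{X}}}\left[e^{F(h,\mathbf{X})}\right]\le \sup_{h\in\mathcal{H}}\psi_F(h)$. (ii) For every $\delta>0$, with probability at least $1-\delta$ in $\mathbf{X}\sim\mu^n$ and $h\sim Q_{\mathbf{X}}$, $F(h,\mathbf{X})\le \sup_{h\in\mathcal{H}}\psi_F(h)+\ln(1/\delta)$. (iii) For every $\delta>0$, with probability at least $1-\delta$ in $\mathbf{X}\sim\mu^n$, $\mathbb{E}_{h\sim Q_{\mathbf{X}}}[F(h,\mathbf{X})]\le \sup_{h\in\mathcal{H}}\psi_F(h)+\ln(1/\delta)$.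
   Context: $\mathcal{X}$ is a measurable space with probability measure $\mu$; $\mathbf{X}=(X_1,\dots,X_n)\sim\mu^n$ and $\mathbf{X}'$ is an independent copy. $\mathcal{H}$ is a measurable space of measurable functions $h:\mathcal{X}\to[0,\infty)$, equipped with a nonnegative (not necessarily finite) a-priori measure $\pi$. A stochastic algorithm $Q$ maps each $\mathbf{x}\in\mathcal{X}^n$ to a probability measure $Q_{\mathbf{x}}$ on $\mathcal{H}$; it is absolutely continuous if $Q_{\mathbf{x}}$ and $\pi$ are mutually absolutely continuous for every $\mathbf{x}$. Its canonical Hamiltonian is $H_Q(h,\mathbf{x})=\ln\big((dQ_{\mathbf{x}}/d\pi)(h)\big)$, assumed jointly measurable. ''With probability in $\mathbf{X}\sim\mu^n$ and $h\sim Q_{\mathbf{X}}$'' refers to the joint law where first $\mathbf{X}\sim\mu^n$ and then $h\sim Q_{\mathbf{X}}$. Standing assumption: all functions on $\mathcal{H}\times\mathcal{X}^n$ considered have finite exponential moments of all orders with respect to both arguments. *)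

From HB Require Import structures.
From mathcomp Require Import all_boot all_order all_algebra.
From mathcomp Require Import all_classical all_reals all_analysis.
Set Implicit Arguments. Unset Strict Implicit. Unset Printing Implicit Defensive.
Import Order.TTheory GRing.Theory Num.Theory.
Local Open Scope classical_set_scope.
Local Open Scope ring_scope.
Local Open Scope ereal_scope.

(* Pn is the n-fold product probability mu^n on n.-tuple X: the (unique)
   probability measure on the product sigma-algebra agreeing with the product
   of the marginals on measurable rectangles. *)
Definition is_product_prob (R : realType) (d : measure_display)
  (X : measurableType d) (mu : probability X R) (n : nat)
  (Pn : probability (n.-tuple X) R) : Prop :=
  forall A : 'I_n -> set X, (forall i, measurable (A i)) ->
    Pn [set t | forall i, A i (tnth t i)] = \prod_(i < n) mu (A i).

Definition abs_cont_algo (R : realType) (dZ dH : measure_display)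
  (Z : measurableType dZ) (Hs : measurableType dH)
  (pi : {measure set Hs -> \bar R}) (Q : R.-pker Z ~> Hs) : Prop :=
  forall x : Z, (Q x `<< pi) /\ (pi `<< Q x).

(* HQ is the canonical Hamiltonian of Q: it is jointly measurable and
   exp (HQ (.,x)) is (a version of) the Radon-Nikodym derivative dQ_x/dpi,
   i.e. HQ(h,x) = ln ((dQ_x/dpi)(h)). *)
Definition canonical_hamiltonian (R : realType) (dZ dH : measure_display)
  (Z : measurableType dZ) (Hs : measurableType dH)
  (pi : {measure set Hs -> \bar R}) (Q : R.-pker Z ~> Hs)
  (HQ : Hs -> Z -> R) : Prop :=
  measurable_fun [set: Hs * Z] (fun p => HQ p.1 p.2) /\
  forall (x : Z) (A : set Hs), measurable A ->
    Q x A = \int[pi]_(h in A) (expR (HQ h x))%:E.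

Definition finite_exp_moments (R : realType) (dZ dH : measure_display)
  (Z : measurableType dZ) (Hs : measurableType dH)
  (P : probability Z R) (Q : R.-pker Z ~> Hs) (f : Hs -> Z -> R) : Prop :=
  (forall (h : Hs) (l : R),
     P.-integrable [set: Z] (fun x => (expR (l * f h x))%:E)) /\
  (forall (x : Z) (l : R),
     (Q x).-integrable [set: Hs] (fun h => (expR (l * f h x))%:E)).

Definition psiF (R : realType) (dZ dH : measure_display)
  (Z : measurableType dZ) (Hs : measurableType dH)
  (P : probability Z R) (HQ F : Hs -> Z -> R) (h : Hs) : \bar R :=
  lne (\int[P]_x (expR (F h x + HQ h x - Rintegral P [set: Z] (HQ h)))%:E).

(* Writing dQ_x = e^{H(.,x)} dpi, Tonelli turns E_X E_{h~Q_X} e^F into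
   int_pi E_X e^{F+H}.  For fixed h, E_X e^{F+H} = e^{E_X H} e^{psi_F(h)}, and
   Jensen bounds e^{E_X H} by E_X e^H; integrating back against pi, where
   int_pi e^{H(.,x)} = 1 since Q_x is a probability, gives
   E_X E_{Q_X} e^F <= e^{sup psi_F}, i.e. (i).  Parts (ii) and (iii) are
   Markov's inequality for e^F, under Q_x resp. under the sample law after
   Jensen's e^{E_Q F} <= E_Q e^F.  The a-priori measure pi is sigma-finite
   because the probability Q_x0 has a positive density with respect to it. *)

From HB Require Import structures.
From mathcomp Require Import all_boot all_order all_algebra.
From mathcomp Require Import all_classical all_reals all_analysis.
From mathcomp Require Import measurable_realfun.
From mathcomp Require Import lra ring.
Set Implicit Arguments. Unset Strict Implicit. Unset Printing Implicit Defensive.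
Import Order.TTheory GRing.Theory Num.Theory.
Local Open Scope classical_set_scope.
Local Open Scope ring_scope.
Local Open Scope ereal_scope.

Lemma lne_le_of_le_expeR (R : realType) (x y : \bar R) :
  0 <= x -> x <= expeR y -> lne x <= y.
Proof.
by move=> x0 xy; rewrite -[y]expeRK lee_lne ?in_itv/= ?leey ?expeR_ge0 ?andbT.
Qed.

Section density.
Context d (T : measurableType d) (R : realType).
Variables (pi : {sigma_finite_measure set T -> \bar R})
  (nu : {finite_measure set T -> \bar R}) (g : T -> R).
Hypotheses (mg : measurable_fun setT g)
  (nuE : forall A, measurable A -> nu A = \int[pi]_(x in A) (g x)%:E).

Lemma density_abs_cont : nu `<< pi.
Proof.
apply/null_content_dominatesP => A mA piA0; rewrite nuE//.
apply: null_set_integral => //.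
by apply/measurable_EFinP; exact: measurable_funTS.
Qed.

Lemma ae_eq_density :
  ae_eq pi setT (Radon_Nikodym_SigmaFinite.f nu pi) (EFin \o g).
Proof.
apply: integral_ae_eq => //.
- exact: Radon_Nikodym_SigmaFinite.f_integrable density_abs_cont.
- exact/measurable_EFinP.
- move=> E _ mE.
  by rewrite -(Radon_Nikodym_SigmaFinite.f_integral density_abs_cont)// nuE.
Qed.

Lemma integral_density (f : T -> \bar R) : (forall x, 0 <= f x) ->
    measurable_fun setT f ->
  \int[nu]_x f x = \int[pi]_x (f x * (g x)%:E).
Proof.
move=> f0 mf.
rewrite -(Radon_Nikodym_SigmaFinite.change_of_variables density_abs_cont)//.
apply: ae_eq_integral => //.
- apply: emeasurable_funM => //.
  exact: measurable_int (Radon_Nikodym_SigmaFinite.f_integrable density_abs_cont).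
- by apply: emeasurable_funM => //; exact/measurable_EFinP.
- exact/ae_eqe_mul2l/ae_eq_density.
Qed.
End density.

Section positive_density.
Context d (T : measurableType d) (R : realType).
Variables (pi : {measure set T -> \bar R}) (q : probability T R) (g : T -> R).
Hypotheses (mg : measurable_fun setT g) (g_gt0 : forall x, (0 < g x)%R)
  (qE : forall A, measurable A -> q A = \int[pi]_(x in A) (g x)%:E).

(* Exhaust by the sets {g >= 1/(k+1)}, of pi-measure at most k+1 since q is a
   probability. *)
Lemma sigma_finite_positive_density : sigma_finite setT pi.
Proof.
pose F (k : nat) := g @^-1` `[(k.+1%:R^-1)%R, +oo[%classic.
have mF k : measurable (F k).
  by rewrite -[F k]setTI; apply: mg => //; exact: measurable_itv.
exists F.
  apply/seteqP; split => // x _; exists (Num.truncn (g x)^-1) => //.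
  rewrite /F /= in_itv /= andbT -[leRHS]invrK lef_pV2 ?posrE ?invr_gt0//.
  exact/ltW/truncnS_gt.
move=> k; split => //.
have qF : (k.+1%:R^-1)%:E * pi (F k) <= 1.
  apply: le_trans (probability_le1 q (mF k)).
  rewrite -(integral_cst pi (mF k)) qE//; apply: ge0_le_integral => //.
  - by move=> x _; rewrite lee_fin invr_ge0.
  - by apply/measurable_EFinP; exact: measurable_funTS.
  - by move=> x; rewrite /F /= in_itv /= andbT lee_fin.
rewrite -[pi _]mul1e -(@divff _ (k.+1%:R)%R) ?pnatr_eq0// EFinM -muleA.
apply: (le_lt_trans (lee_wpmul2l _ qF)); first by rewrite lee_fin.
by rewrite mule1 ltry.
Qed.
End positive_density.

Section sigma_finite_measure_of.
Context d (T : measurableType d) (R : realType).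

Definition sigma_finite_measure_of (pi : {measure set T -> \bar R})
  of sigma_finite setT pi : set T -> \bar R := pi.

Variables (pi : {measure set T -> \bar R}) (pi_sfin : sigma_finite setT pi).

HB.instance Definition _ := Measure.copy (sigma_finite_measure_of pi_sfin) pi.
HB.instance Definition _ :=
  Measure_isSigmaFinite.Build _ _ _ (sigma_finite_measure_of pi_sfin) pi_sfin.
End sigma_finite_measure_of.

Section exponential_moments.
Context d (T : measurableType d) (R : realType).
Variable mu : {measure set T -> \bar R}.
Hypothesis mu1 : mu setT = 1.

Lemma nonempty_of_mass1 : [set: T] !=set0.
Proof.
apply/set0P/negP => /eqP T0; move: mu1; rewrite T0 measure0 => /eqP.
by rewrite eq_sym onee_eq0.
Qed.

Lemma expR_Rintegral_le (f : T -> R) : mu.-integrable setT (EFin \o f) ->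
  (expR (Rintegral mu setT f))%:E <= \int[mu]_x (expR (f x))%:E.
Proof.
move=> intf; set a := Rintegral mu setT f.
have mf : measurable_fun setT f by exact/measurable_EFinP/(measurable_int mu intf).
have [iexpf|nexpf] :=
    pselect (mu.-integrable setT (fun x => (expR (f x))%:E)); last first.
  suff -> : \int[mu]_x (expR (f x))%:E = +oo by rewrite leey.
  apply/eqP; rewrite -leye_eq leNgt; apply/negP => fin.
  apply: nexpf; apply/integrableP; split.
    by apply/measurable_EFinP; exact: measurableT_comp.
  by under eq_integral do rewrite gee0_abs ?lee_fin ?expR_ge0//.
have fa : \int[mu]_x (f x)%:E = a%:E.
  by rewrite /a /Rintegral fineK// (integrable_fin_num _ intf).
have icst (c : R) : mu.-integrable setT (fun=> c%:E).
  apply/integrableP; split; first exact: measurable_cst.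
  by rewrite integral_cst// mu1 mule1 ltry.
(* integrate the tangent line of expR at a *)
have -> : (expR a)%:E =
    \int[mu]_x ((expR a * (1 - a))%:E + (expR a)%:E * (f x)%:E).
  rewrite integralD//; last exact: integrableZl.
  rewrite integral_cst// mu1 mule1 integralZl// fa.
  by rewrite -EFinM -EFinD; congr EFin; ring.
apply: le_integral => //; first by apply: integrableD => //; exact: integrableZl.
move=> x _; rewrite -EFinM -EFinD lee_fin.
rewrite -[in leRHS](subrK a (f x)) expRD.
by have := expR_ge1Dx (f x - a); have := expR_gt0 a; nra.
Qed.

Lemma integrable_exp_moments (f : T -> R) : measurable_fun setT f ->
  (forall l, mu.-integrable setT (fun x => (expR (l * f x))%:E)) ->
  mu.-integrable setT (EFin \o f).
Proof.
move=> mf iexp.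
have iexpf : mu.-integrable setT (fun x => (expR (f x))%:E).
  by have := iexp 1%R; under eq_fun do rewrite mul1r.
have iexpNf : mu.-integrable setT (fun x => (expR (- f x))%:E).
  by have := iexp (-1)%R; under eq_fun do rewrite mulN1r.
apply: (le_integrable _ _ _ (integrableD _ iexpf iexpNf)) => //.
  exact/measurable_EFinP.
move=> x _ /=; rewrite lee_fin [leRHS]ger0_norm ?addr_ge0 ?expR_ge0//.
have := expR_ge1Dx (f x); have := expR_ge1Dx (- f x).
have := expR_ge0 (f x); have := expR_ge0 (- f x).
by case: (lerP 0 (f x)) => f0; [rewrite ger0_norm | rewrite ltr0_norm]; lra.
Qed.

Lemma markov_expR (B : set T) (g : T -> \bar R) (r : R) :
    measurable B -> measurable_fun setT g -> (forall x, 0 <= g x) ->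
    (forall x, ~ B x -> (expR r)%:E <= g x) ->
  1 <= mu B + (expR (- r))%:E * \int[mu]_x g x.
Proof.
move=> mB mg g0 gB.
have mCB : measurable (~` B) by exact: measurableC.
have -> : 1 = mu B + mu (~` B) by rewrite -measureU ?setUv ?setICr.
apply: leeD2l; rewrite -(setIT (~` B)) -integral_indic//.
rewrite -ge0_integralZl//; apply: ge0_le_integral => //.
- by apply/measurable_EFinP/measurable_indic; exact: measurableC.
- exact: measurable_funeM.
move=> x _; rewrite indicE; have [/set_mem/gB gxr|_] := boolP (x \in ~` B).
  have e_ge0 : 0 <= (expR (- r))%:E by rewrite lee_fin expR_ge0.
  apply: le_trans (lee_wpmul2l e_ge0 gxr).
  by rewrite -EFinM -expRD addNr expR0.
by rewrite mule_ge0 ?lee_fin ?expR_ge0.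
Qed.
End exponential_moments.

Section kernel_tail_bounds.
Context dT dH (T : measurableType dT) (Hs : measurableType dH) (R : realType).
Variables (P : probability T R) (Q : R.-pker T ~> Hs) (F : Hs -> T -> R).
Hypothesis mF : measurable_fun [set: Hs * T] (fun p => F p.1 p.2).

Let P1 : (P : {measure set T -> \bar R}) setT = 1.
Proof. exact: probability_setT. Qed.

Let Q1 x : Q x setT = 1. Proof. exact: prob_kernel. Qed.

Let mF_swap : measurable_fun [set: T * Hs] (fun p => F p.2 p.1).
Proof. exact: measurableT_comp mF (@measurable_swap _ _ T Hs). Qed.

Let mFx x : measurable_fun setT (F^~ x).
Proof. exact: measurableT_comp mF (pair2_measurable x). Qed.

Lemma measurable_integral_expR_kernel :
  measurable_fun setT (fun x => \int[Q x]_h (expR (F h x))%:E).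
Proof.
apply: (measurable_fun_integral_finite_kernel
  (fun p : T * Hs => (expR (F p.2 p.1))%:E)).
- by move=> p; rewrite lee_fin expR_ge0.
- by apply/measurable_EFinP; exact: measurableT_comp.
Qed.

Lemma integral_add_expR_ge1 (a phi : T -> \bar R) (s r : R) :
    \int[P]_x phi x <= (expR s)%:E ->
    measurable_fun setT a -> measurable_fun setT phi ->
    (forall x, 0 <= a x) -> (forall x, 0 <= phi x) ->
    (forall x, 1 <= a x + (expR (- r))%:E * phi x) ->
  1 <= \int[P]_x a x + (expR (s - r))%:E.
Proof.
move=> phis ma mphi a0 phi0 aphi.
have e_ge0 : 0 <= (expR (- r))%:E by rewrite lee_fin expR_ge0.
apply: (le_trans (y := \int[P]_x (a x + (expR (- r))%:E * phi x))).
  have -> : 1 = \int[P]_x (cst 1 x) by rewrite integral_cst// P1 mule1.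
  apply: ge0_le_integral => //.
  by apply: emeasurable_funD => //; exact: measurable_funeM.
rewrite ge0_integralD//; last 2 first.
- by move=> x _; rewrite mule_ge0.
- exact: measurable_funeM.
rewrite ge0_integralZl//; apply: leeD2l.
by rewrite [(s - r)%R]addrC expRD EFinM; exact: lee_wpmul2l.
Qed.

Lemma kernel_sublevel_bound (s r : R) :
    \int[P]_x \int[Q x]_h (expR (F h x))%:E <= (expR s)%:E ->
  1 <= \int[P]_x Q x [set h | (F h x)%:E <= r%:E] + (expR (s - r))%:E.
Proof.
move=> Fs; pose D := [set p : T * Hs | (F p.2 p.1)%:E <= r%:E].
have mD : measurable D.
  rewrite -[D]setTI; apply: emeasurable_fun_infty_c => //.
  exact/measurable_EFinP.
have mDx x : measurable [set h | (F h x)%:E <= r%:E].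
  by rewrite -[X in measurable X]setTI; apply: emeasurable_fun_infty_c => //;
    exact/measurable_EFinP.
apply: (@integral_add_expR_ge1 _ (fun x => \int[Q x]_h (expR (F h x))%:E) _ _ Fs)
  => //.
- rewrite (_ : (fun x => _) = fun x => \int[Q x]_h (\1_D (x, h))%:E).
    apply: (measurable_fun_integral_finite_kernel (fun p => (\1_D p)%:E)) => //.
    exact/measurable_EFinP/measurable_indic.
  apply/funext => x; rewrite integral_indic//.
  by congr (Q x _); apply/seteqP; split=> h /=; [split | case].
- exact: mDx.
- exact: measurable_integral_expR_kernel.
- by move=> x; apply: integral_ge0 => h _; rewrite lee_fin expR_ge0.
- move=> x; apply: (markov_expR (Q1 x)) => //.
  + by apply/measurable_EFinP; exact: measurableT_comp.
  + by move=> h /negP; rewrite -ltNge lte_fin => /ltW; rewrite lee_fin ler_expR.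
Qed.

Lemma measurable_integral_kernel :
  measurable_fun setT (fun x => \int[Q x]_h (F h x)%:E).
Proof.
pose G := fun p : T * Hs => (F p.2 p.1)%:E.
have mG : measurable_fun setT G by exact/measurable_EFinP.
rewrite (_ : (fun x => _) =
    fun x => \int[Q x]_h G^\+ (x, h) - \int[Q x]_h G^\- (x, h)).
  apply: emeasurable_funB.
  - apply: (measurable_fun_integral_finite_kernel G^\+); first exact: funepos_ge0.
    exact: measurable_funepos.
  - apply: (measurable_fun_integral_finite_kernel G^\-); first exact: funeneg_ge0.
    exact: measurable_funeneg.
apply/funext => x; rewrite integralE.
by congr (_ - _); apply: eq_integral => h _; rewrite ?funeposE ?funenegE.
Qed.

Lemma kernel_mean_sublevel_bound (s r : R) :
    (forall x, (Q x).-integrable setT (EFin \o F^~ x)) ->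
    \int[P]_x \int[Q x]_h (expR (F h x))%:E <= (expR s)%:E ->
  1 <= P [set x | \int[Q x]_h (F h x)%:E <= r%:E] + (expR (s - r))%:E.
Proof.
move=> iF Fs; set A := [set x | _].
have mA : measurable A.
  rewrite -[A]setTI; apply: emeasurable_fun_infty_c => //.
  exact: measurable_integral_kernel.
have phi0 x : 0 <= \int[Q x]_h (expR (F h x))%:E.
  by apply: integral_ge0 => h _; rewrite lee_fin expR_ge0.
apply: le_trans
  (markov_expR P1 (r := r) mA measurable_integral_expR_kernel phi0 _) _.
  move=> x /negP; rewrite -ltNge => /ltW rF.
  apply: le_trans (expR_Rintegral_le (Q1 x) (iF x)).
  rewrite lee_fin ler_expR -lee_fin /Rintegral fineK//.
  exact: integrable_fin_num (iF x).
apply: leeD2l; rewrite [(s - r)%R]addrC expRD EFinM.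
by apply: lee_wpmul2l; rewrite ?lee_fin ?expR_ge0.
Qed.

Let sublevel_pinfty (U : Type) (f : U -> \bar R) (c : R) :
  [set u | f u <= +oo + c%:E] = setT.
Proof. by apply/seteqP; split => // u _; rewrite /= addye// leey. Qed.

Let one_sub_le1 (delta : R) : (0 < delta)%R -> (1 - delta)%:E <= 1.
Proof. by move=> d0; rewrite lee_fin lerBlDr lerDl ltW. Qed.

Let one_sub_le (s delta : R) (a : \bar R) : (0 < delta)%R ->
  1 <= a + (expR (s - (s + ln delta^-1)))%:E -> (1 - delta)%:E <= a.
Proof.
by move=> d0; rewrite opprD addNKr lnV ?posrE// opprK lnK// EFinB leeBlDr.
Qed.

Lemma kernel_sublevel_confidence (S : \bar R) (delta : R) :
    -oo < S -> (0 < delta)%R ->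
    \int[P]_x \int[Q x]_h (expR (F h x))%:E <= expeR S ->
  (1 - delta)%:E <= \int[P]_x Q x [set h | (F h x)%:E <= S + (ln delta^-1)%:E].
Proof.
case: S => [s _ d0 Fs|_ d0 _|//].
  by rewrite -EFinD; apply: one_sub_le d0 _; exact: kernel_sublevel_bound.
under eq_integral do rewrite sublevel_pinfty Q1.
by rewrite integral_cst// P1 mule1 one_sub_le1.
Qed.

Lemma kernel_mean_sublevel_confidence (S : \bar R) (delta : R) :
    (forall x, (Q x).-integrable setT (EFin \o F^~ x)) ->
    -oo < S -> (0 < delta)%R ->
    \int[P]_x \int[Q x]_h (expR (F h x))%:E <= expeR S ->
  (1 - delta)%:E <= P [set x | \int[Q x]_h (F h x)%:E <= S + (ln delta^-1)%:E].
Proof.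
move=> iF; case: S => [s _ d0 Fs|_ d0 _|//].
  by rewrite -EFinD; apply: one_sub_le d0 _; exact: kernel_mean_sublevel_bound.
by rewrite sublevel_pinfty probability_setT one_sub_le1.
Qed.
End kernel_tail_bounds.

Section psiF_bounds.
Context dT dH (T : measurableType dT) (Hs : measurableType dH) (R : realType).
Variables (P : probability T R) (HQ F : Hs -> T -> R) (h : Hs).
Hypotheses (iF : P.-integrable setT (EFin \o F h))
  (iHQ : P.-integrable setT (EFin \o HQ h)).

Let P1 : (P : {measure set T -> \bar R}) setT = 1.
Proof. exact: probability_setT. Qed.

Let c := Rintegral P setT (HQ h).
Let g x := (F h x + HQ h x - c)%R.

Let iFH : P.-integrable setT (EFin \o (fun x => F h x + HQ h x)%R).
Proof.
rewrite (_ : EFin \o _ = (EFin \o F h) \+ (EFin \o HQ h)); first exact: integrableD.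
by apply/funext => x /=; rewrite EFinD.
Qed.

Let ic : P.-integrable setT (cst c%:E).
Proof.
apply/integrableP; split; first exact: measurable_cst.
by rewrite integral_cst// P1 mule1 ltry.
Qed.

Let ig : P.-integrable setT (EFin \o g).
Proof.
rewrite (_ : EFin \o g = (EFin \o (fun x => F h x + HQ h x)%R) \- cst c%:E).
  exact: integrableB.
by apply/funext => x /=; rewrite EFinB.
Qed.

Let expR_g_ge0 : 0 <= \int[P]_x (expR (g x))%:E.
Proof. by apply: integral_ge0 => x _; rewrite lee_fin expR_ge0. Qed.

Lemma Rintegral_le_psiF : (Rintegral P setT (F h))%:E <= psiF P HQ F h.
Proof.
have -> : Rintegral P setT (F h) = Rintegral P setT g.
  by rewrite RintegralB// RintegralD// Rintegral_cst// (congr1 fine P1) mulr1 addrK.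
rewrite -[leLHS]expeRK lee_lne ?in_itv/= ?leey ?expeR_ge0 ?andbT//.
by have := expR_Rintegral_le P1 ig.
Qed.

Lemma integral_expR_add_le : \int[P]_x (expR (F h x + HQ h x))%:E <=
  expeR (psiF P HQ F h) * \int[P]_x (expR (HQ h x))%:E.
Proof.
have -> : \int[P]_x (expR (F h x + HQ h x))%:E =
    (expR c)%:E * \int[P]_x (expR (g x))%:E.
  rewrite -ge0_integralZl//; last first.
    apply/measurable_EFinP/measurableT_comp => //.
    exact/measurable_EFinP/(measurable_int P ig).
  by apply: eq_integral => x _; rewrite -EFinM -expRD /g subrKC.
rewrite /psiF lneK ?in_itv/= ?leey ?andbT// muleC.
by apply: lee_wpmul2l => //; have := expR_Rintegral_le P1 iHQ.
Qed.

Lemma ereal_sup_psiF_gt_ninfty : -oo < ereal_sup (range (psiF P HQ F)).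
Proof.
have psi_le_sup : psiF P HQ F h <= ereal_sup (range (psiF P HQ F)).
  by apply: ereal_sup_ubound; exists h.
have := le_trans Rintegral_le_psiF psi_le_sup.
by apply: lt_le_trans; rewrite ltNye.
Qed.
End psiF_bounds.

Section probability_of_kernel.
Context dT dH (T : measurableType dT) (Hs : measurableType dH) (R : realType).
Variables (Q : R.-pker T ~> Hs) (x : T).

Definition probability_of_kernel : set Hs -> \bar R := Q x.
HB.instance Definition _ := Measure.copy probability_of_kernel (Q x).
HB.instance Definition _ :=
  Measure_isProbability.Build _ _ _ probability_of_kernel (prob_kernel x).
End probability_of_kernel.

Section canonical_hamiltonian.
Context dT dH (T : measurableType dT) (Hs : measurableType dH) (R : realType).
Variables (pi : {measure set Hs -> \bar R}) (Q : R.-pker T ~> Hs).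

Lemma sigma_finite_canonical_hamiltonian (HQ : Hs -> T -> R) (x0 : T) :
  canonical_hamiltonian pi Q HQ -> sigma_finite setT pi.
Proof.
move=> [mHQ QE].
apply: (sigma_finite_positive_density (q := probability_of_kernel Q x0)
  (g := fun h => expR (HQ h x0))).
- apply: measurableT_comp => //.
  exact: measurableT_comp mHQ (pair2_measurable x0).
- by move=> h; exact: expR_gt0.
- exact: QE.
Qed.

Lemma integrable_finite_exp_moments (P : probability T R) (f : Hs -> T -> R) :
    measurable_fun [set: Hs * T] (fun p => f p.1 p.2) ->
    finite_exp_moments P Q f ->
  (forall h, P.-integrable setT (EFin \o f h)) /\
  (forall x, (Q x).-integrable setT (EFin \o f^~ x)).
Proof.
move=> mf [fexp_h fexp_x]; split.
- move=> h; apply: integrable_exp_moments (fexp_h h).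
  exact: measurableT_comp mf (pair1_measurable h).
- move=> x; apply: integrable_exp_moments (fexp_x x).
  exact: measurableT_comp mf (pair2_measurable x).
Qed.
End canonical_hamiltonian.

Section gibbs_bound.
Context dT dH (T : measurableType dT) (Hs : measurableType dH) (R : realType).
Variables (P : probability T R) (pi : {sigma_finite_measure set Hs -> \bar R})
  (Q : R.-pker T ~> Hs) (HQ F : Hs -> T -> R).
Hypotheses (mHQ : measurable_fun [set: Hs * T] (fun p => HQ p.1 p.2))
  (mF : measurable_fun [set: Hs * T] (fun p => F p.1 p.2))
  (QE : forall x A, measurable A ->
    Q x A = \int[pi]_(h in A) (expR (HQ h x))%:E)
  (iF : forall h, P.-integrable setT (EFin \o F h))
  (iHQ : forall h, P.-integrable setT (EFin \o HQ h)).

Let P1 : (P : {measure set T -> \bar R}) setT = 1.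
Proof. exact: probability_setT. Qed.

Let Q1 x : Q x setT = 1. Proof. exact: prob_kernel. Qed.

Let mHQx x : measurable_fun setT (HQ^~ x).
Proof. exact: measurableT_comp mHQ (pair2_measurable x). Qed.

Lemma integral_kernel_density x (f : Hs -> \bar R) : (forall h, 0 <= f h) ->
    measurable_fun setT f ->
  \int[Q x]_h f h = \int[pi]_h (f h * (expR (HQ h x))%:E).
Proof.
move=> f0 mf; apply: (integral_density (nu := probability_of_kernel Q x)) => //.
- exact: measurableT_comp.
- exact: QE.
Qed.

Let exp_ge0 (r : R) : 0 <= (expR r)%:E.
Proof. by rewrite lee_fin expR_ge0. Qed.

Let mFH : measurable_fun [set: T * Hs]
  (fun p => (expR (F p.2 p.1 + HQ p.2 p.1))%:E).
Proof.
apply/measurable_EFinP/measurableT_comp => //; apply: measurable_funD.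
- exact: measurableT_comp mF (@measurable_swap _ _ T Hs).
- exact: measurableT_comp mHQ (@measurable_swap _ _ T Hs).
Qed.

Let mH : measurable_fun [set: T * Hs] (fun p => (expR (HQ p.2 p.1))%:E).
Proof.
apply/measurable_EFinP/measurableT_comp => //.
exact: measurableT_comp mHQ (@measurable_swap _ _ T Hs).
Qed.

Lemma integral_kernel_expR :
  \int[P]_x \int[Q x]_h (expR (F h x))%:E =
  \int[pi]_h \int[P]_x (expR (F h x + HQ h x))%:E.
Proof.
rewrite -(fubini_tonelli _ mFH)//=; apply: eq_integral => x _.
rewrite integral_kernel_density//; last first.
  apply/measurable_EFinP/measurableT_comp => //.
  exact: measurableT_comp mF (pair2_measurable x).
by apply: eq_integral => h _; rewrite -EFinM expRD.
Qed.

Lemma integral_kernel_expR_le :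
  \int[P]_x \int[Q x]_h (expR (F h x))%:E <=
  expeR (ereal_sup (range (psiF P HQ F))).
Proof.
set S := ereal_sup _.
rewrite integral_kernel_expR.
apply: (le_trans (y := \int[pi]_h (expeR S * \int[P]_x (expR (HQ h x))%:E))).
  apply: ge0_le_integral => //.
  - by move=> h _; apply: integral_ge0.
  - by apply: (measurable_fun_fubini_tonelli_G _ mFH) => p; exact: exp_ge0.
  - apply: measurable_funeM.
    by apply: (measurable_fun_fubini_tonelli_G _ mH) => p; exact: exp_ge0.
  move=> h _; apply: le_trans (integral_expR_add_le (iF h) (iHQ h)) _.
  apply: lee_wpmul2r; first by apply: integral_ge0.
  by rewrite lee_expeR; apply: ereal_sup_ubound; exists h.
rewrite ge0_integralZl//; last 3 first.
- by apply: (measurable_fun_fubini_tonelli_G _ mH) => p; exact: exp_ge0.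
- by move=> h _; apply: integral_ge0.
- exact: expeR_ge0.
rewrite -(fubini_tonelli _ mH)//=.
under eq_integral do rewrite -QE// Q1.
by rewrite integral_cst// P1 !mule1.
Qed.
End gibbs_bound.

Theorem proposition1 (R : realType) (dX dH : measure_display)
  (X : measurableType dX) (Hs : measurableType dH)
  (mu : probability X R) (n : nat) (Pn : probability (n.-tuple X) R)
  (pi : {measure set Hs -> \bar R}) (Q : R.-pker (n.-tuple X) ~> Hs)
  (HQ F : Hs -> n.-tuple X -> R) :
  is_product_prob mu Pn ->
  abs_cont_algo pi Q ->
  canonical_hamiltonian pi Q HQ ->
  measurable_fun [set: Hs * n.-tuple X] (fun p => F p.1 p.2) ->
  finite_exp_moments Pn Q F ->
  finite_exp_moments Pn Q HQ ->
  let S := ereal_sup (range (psiF Pn HQ F)) in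
  [/\ lne (\int[Pn]_x \int[Q x]_h (expR (F h x))%:E) <= S,
      (forall delta : R, (0 < delta)%R ->
        (1 - delta)%:E <=
        \int[Pn]_x Q x [set h | (F h x)%:E <= S + (ln delta^-1)%:E])
    & (forall delta : R, (0 < delta)%R ->
        (1 - delta)%:E <=
        Pn [set x | \int[Q x]_h (F h x)%:E <= S + (ln delta^-1)%:E])].
Proof.
move=> _ _ HQ_can mF Fexp HQexp S.
have [mHQ QE] := HQ_can.
have Pn1 : (Pn : {measure set _ -> \bar R}) setT = 1 by exact: probability_setT.
have Q1 x : Q x setT = 1 by exact: prob_kernel.
have [iF iFx] := integrable_finite_exp_moments mF Fexp.
have [iHQ _] := integrable_finite_exp_moments mHQ HQexp.
have [x0 _] := nonempty_of_mass1 Pn1; have [h0 _] := nonempty_of_mass1 (Q1 x0).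
have pi_sfin := sigma_finite_canonical_hamiltonian x0 HQ_can.
have gibbs := integral_kernel_expR_le (pi := sigma_finite_measure_of pi_sfin)
  mHQ mF QE iF iHQ.
have S_gt : -oo < S := ereal_sup_psiF_gt_ninfty (iF h0) (iHQ h0).
split => [|delta d0|delta d0].
- apply: lne_le_of_le_expeR gibbs.
  apply: integral_ge0 => x _; apply: integral_ge0 => h _.
  by rewrite lee_fin expR_ge0.
- exact: kernel_sublevel_confidence.
- exact: kernel_mean_sublevel_confidence.
Qed.
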